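(* For every $n\geq1$, the number of $D_{2n}$-orbits of $\mathbf{X}_n$ whose elements have a stabilizer not contained in the rotation subgroup $\langle\sigma\rangle=\{1,\sigma,\dots,\sigma^{n-1}\}$ equals $r(n)$.
   Context: For $n\geq1$ let $V_n=\{v_0,\dots,v_{n-1}\}$, indices modulo $n$. The dihedral group $D_{2n}=\{1,\sigma,\dots,\sigma^{n-1},\tau,\sigma\tau,\dots,\sigma^{n-1}\tau\}$ acts on subsets of $V_n$ elementwise, with $\sigma(v_i)=v_{i+1}$, $\tau(v_i)=v_{n-i}$. Let $\mathbf{X}_n$ be the family of subsets $X\subseteq V_n$ such that (a) there is no $i\in\mathbb{Z}_n$ with $v_i,v_{i+1}\in X$, and (b) for every $i\in\mathbb{Z}_n$ at least one of $v_i,v_{i+1},v_{i+2}$ lies in $X$ (for $n\geq 3$: the maximal independent sets of the cycle graph $C_n$). For $X\in\mathbf{X}_n$, $\mathrm{Stab}(X)=\{g\in D_{2n}:g(X)=X\}$. The Padovan sequence is $q(1)=0$, $q(2)=1$, $q(3)=1$, $q(n)=q(n-2)+q(n-3)$ for $n\geq4$, and $r(2k-1)=q(k)$, $r(2k)=q(k+2)$ for $k\geq1$. *)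

From mathcomp Require Import all_boot.
Set Implicit Arguments. Unset Strict Implicit. Unset Printing Implicit Defensive.

(* Vertices v_0..v_{n-1} are represented by 'I_n; a subset X of V_n is a
   {set 'I_n}.  Indices are taken modulo n. *)

Definition inX (n : nat) (X : {set 'I_n}) (i : nat) : bool :=
  [exists j in X, nat_of_ord j == i %% n].

(* The dihedral group D_{2n}: the element (k, false) is sigma^k and the
   element (k, true) is sigma^k tau.  These are 2n distinct group elements. *)
Definition dih (n : nat) : finType := ('I_n * bool)%type.

(* Action on vertex indices: sigma^k (v_i) = v_{i+k},
   sigma^k tau (v_i) = sigma^k (v_{n-i}) = v_{k+n-i}. *)
Definition act_idx (n : nat) (g : dih n) (i : nat) : nat :=
  if g.2 then (g.1 + (n - i)) %% n else (g.1 + i) %% n.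

Definition act_set (n : nat) (g : dih n) (X : {set 'I_n}) : {set 'I_n} :=
  [set j : 'I_n | [exists v in X, nat_of_ord j == act_idx g v]].

Definition Xfam (n : nat) : {set {set 'I_n}} :=
  [set X : {set 'I_n} |
     [forall i : 'I_n, ~~ (inX X i && inX X i.+1)] &&
     [forall i : 'I_n, [|| inX X i, inX X i.+1 | inX X i.+2]]].

Definition Stab (n : nat) (X : {set 'I_n}) : {set dih n} :=
  [set g : dih n | act_set g X == X].

Definition rotations (n : nat) : {set dih n} := [set g : dih n | ~~ g.2].

Definition orbit_of (n : nat) (X : {set 'I_n}) : {set {set 'I_n}} :=
  [set act_set g X | g : dih n].

Definition refl_orbits (n : nat) : {set {set {set 'I_n}}} :=
  [set orbit_of X | X in [set X in Xfam n | ~~ (Stab X \subset rotations n)]].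

(* Padovan sequence: q 1 = 0, q 2 = 1, q 3 = 1, q n = q (n-2) + q (n-3).
   (q 0 is unused.) *)
Fixpoint padq (n : nat) : nat :=
  match n with
  | 0 | 1 => 0
  | 2 | 3 => 1
  | S (S ((S ((S m) as a)) as b)) => padq b + padq a
  end.

(* r(2k-1) = q(k), r(2k) = q(k+2). *)
Definition padr (n : nat) : nat :=
  if odd n then padq (n.+1)./2 else padq (n./2 + 2).

From HB Require Import structures.
From mathcomp Require Import all_boot fingroup action ssralg zmodp zify.
Set Implicit Arguments. Unset Strict Implicit. Unset Printing Implicit Defensive.

Import GRing.Theory.

(* An orbit either consists of sets with a reflection symmetry or contains none, so
   Burnside's lemma applies to the action of D_{2n} on the symmetric members of X_n.
   On a set fixed by a reflection r, g |-> r g matches the rotations fixing it with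
   the reflections fixing it; hence n times the number of orbits is the number of
   pairs (reflection, fixed set).  Conjugation by rotations leaves one class of
   reflections for n odd and two for n even (axes through vertices or through
   edges).  Read as a binary word, a set fixed by a reflection is a palindrome, and
   the cyclic conditions reduce to the windows of one half closed off by its mirror
   letters.  Those linear words are counted by a transfer recursion whose
   characteristic polynomial X^3 - X - 1 is that of the Padovan sequence. *)

(** * Binary words *)

Fixpoint bitseqs (k : nat) : seq bitseq :=
  if k is k'.+1 then map (cons true) (bitseqs k') ++ map (cons false) (bitseqs k')
  else [:: [::]].

Lemma mem_bitseqs k s : (s \in bitseqs k) = (size s == k).
Proof.
elim: k s => [|k IH] s; first by case: s.
rewrite /= mem_cat; case: s => [|b s] /=.
  by apply/negbTE/negP => /orP[] /mapP[t].
have cons_inj c : injective (cons c : bitseq -> bitseq) by move=> x y [].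
case: b; rewrite !(mem_map (cons_inj _)) IH eqSS.
  by apply/orP/idP => [[//|/mapP[t]//]|->]; left.
by apply/orP/idP => [[/mapP[t]//|//]|->]; right.
Qed.

Lemma uniq_bitseqs k : uniq (bitseqs k).
Proof.
elim: k => [|k IH] //=; rewrite cat_uniq !map_inj_uniq ?IH //; try by move=> ? ? [].
by rewrite andbT; apply/hasPn => s /mapP[t _ ->]; apply/mapP => -[u].
Qed.

Lemma count_bitseqsS k (P : pred bitseq) :
  count P (bitseqs k.+1) =
  count (fun s => P (true :: s)) (bitseqs k) + count (fun s => P (false :: s)) (bitseqs k).
Proof. by rewrite /= count_cat !count_map. Qed.

Lemma count_bitseqs_bij (n k : nat) (f g : bitseq -> bitseq) (Q P : pred bitseq) :
  (forall v, size v = k -> [/\ size (f v) = n, Q (f v) & g (f v) = v]) ->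
  (forall L, size L = n -> Q L -> size (g L) = k /\ f (g L) = L) ->
  count (fun L => Q L && P L) (bitseqs n) = count (fun v => P (f v)) (bitseqs k).
Proof.
move=> Hf Hg.
have -> : count (fun L => Q L && P L) (bitseqs n) = count P (filter Q (bitseqs n)).
  by rewrite count_filter; apply: eq_count => L /=; rewrite andbC.
have pe : perm_eq (filter Q (bitseqs n)) (map f (bitseqs k)).
  apply: uniq_perm; first exact/filter_uniq/uniq_bitseqs.
    rewrite map_inj_in_uniq ?uniq_bitseqs // => v w.
    rewrite !mem_bitseqs => /eqP sv /eqP sw e.
    by have [_ _ <-] := Hf v sv; have [_ _ <-] := Hf w sw; rewrite e.
  move=> L; rewrite mem_filter mem_bitseqs; apply/andP/mapP => [[QL /eqP sL]|[v]].
    by have [sg fg] := Hg L sL QL; exists (g L); rewrite ?mem_bitseqs ?sg.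
  by rewrite mem_bitseqs => /eqP sv ->; have [-> -> _] := Hf v sv.
by rewrite (permP pe) count_map.
Qed.

Lemma count_palindromes_even h (P : pred bitseq) :
  count (fun L => (L == rev L) && P L) (bitseqs h.*2) =
  count (fun v => P (v ++ rev v)) (bitseqs h).
Proof.
apply: (count_bitseqs_bij (g := take h)) => [v sv|L sL /eqP pL].
  by rewrite size_cat size_rev sv addnn rev_cat revK eqxx take_size_cat.
have st : size (take h L) = h by rewrite size_takel // sL -addnn leq_addr.
split => //; have -> : rev (take h L) = drop h L.
  by rewrite {1}pL take_rev sL -addnn addnK revK.
exact: cat_take_drop.
Qed.

Lemma count_palindromes_odd h (P : pred bitseq) :
  count (fun L => (L == rev L) && P L) (bitseqs h.*2.+1) =
  count (fun v => P (v ++ behead (rev v))) (bitseqs h.+1).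
Proof.
apply: (count_bitseqs_bij (g := take h.+1)) => [v sv|L sL /eqP pL].
  case/lastP: v sv => [//|w c]; rewrite size_rcons => -[sw].
  rewrite rev_rcons /= size_cat size_rcons size_rev sw addSn addnn.
  by rewrite take_size_cat ?size_rcons ?sw // rev_cat revK cat_rcons rev_rcons eqxx.
have st : size (take h.+1 L) = h.+1 by rewrite size_takel // sL -addnn ltnS leq_addr.
split => //; have -> : rev (take h.+1 L) = drop h L.
  by rewrite {1}pL take_rev sL (_ : h.*2.+1 - h.+1 = h) ?revK //; lia.
by rewrite -drop1 drop_drop add1n cat_take_drop.
Qed.

Lemma last_rev (T : Type) (x : T) (s : seq T) : last x (rev s) = head x s.
Proof. by case: s => //= y s; rewrite rev_cons last_rcons. Qed.

(** * Maximal independent sets of a cycle as binary words *)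

(* The conditions (a) and (b) of X_n, read on three consecutive vertices. *)
Definition mis_window (x y z : bool) := [&& ~~ (x && y), ~~ (y && z) & [|| x, y | z]].

Lemma mis_windowC x y z : mis_window x y z = mis_window z y x.
Proof. by case: x; case: y; case: z. Qed.

Fixpoint mis_path (s : bitseq) : bool :=
  match s with
  | x :: ((y :: z :: _) as t) => mis_window x y z && mis_path t
  | _ => true
  end.

Lemma mis_path_map_iota (f : nat -> bool) s k :
  mis_path (map f (iota s k)) <->
  (forall j, j + 2 < k -> mis_window (f (s + j)) (f (s + j).+1) (f (s + j).+2)).
Proof.
elim: k s => [|[|[|k]] IH] s; try by split => // _ j; lia.
have -> : mis_path (map f (iota s k.+3)) =
   mis_window (f s) (f s.+1) (f s.+2) && mis_path (map f (iota s.+1 k.+2)) by [].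
split.
  move=> /andP[h1 /IH h2] [|j] lj; first by rewrite addn0.
  by rewrite -addSnnS; apply: h2; lia.
move=> H; apply/andP; split; first by have := H 0; rewrite addn0; apply.
by apply/IH => j lj; rewrite addSnnS; apply: H; lia.
Qed.

Definition cnth (L : bitseq) i := nth false L (i %% size L).

Definition mis_cycle (L : bitseq) :=
  all (fun i => mis_window (cnth L i) (cnth L i.+1) (cnth L i.+2)) (iota 0 (size L)).

Section SymmetricPeriodic.

Variables (b : nat -> bool) (n R k : nat).
Hypothesis b_per : forall p, b (p + n) = b p.

Lemma mis_window_mod i :
  mis_window (b i) (b i.+1) (b i.+2) =
  mis_window (b (i %% n)) (b (i %% n).+1) (b (i %% n).+2).
Proof.
have b_perq q p : b (p + q * n) = b p.
  by elim: q => [|q IH]; rewrite ?mul0n ?addn0 // mulSn addnCA addnC b_per IH.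
have e t : b (i + t) = b (i %% n + t) by rewrite {1}(divn_eq i n) -addnA addnC b_perq.
by have := e 0; have := e 1; have := e 2; rewrite !addn0 !addn1 !addn2 => -> -> ->.
Qed.

Hypotheses (n_gt0 : 0 < n) (b_sym : forall p, p <= R -> b (R - p) = b p).
Hypotheses (R_ge : n.*2 <= R.+1) (Rk : R + 5 <= n + k.*2) (k_ge3 : 3 <= k).

(* Each window of a period lies in the segment or is mirrored into it by [p |-> R - p];
   this is what the bounds on [R] and [k] guarantee. *)
Lemma mis_windows_of_segment :
  mis_path (map b (iota n.-1 k)) -> forall i, mis_window (b i) (b i.+1) (b i.+2).
Proof.
move/mis_path_map_iota => H i; rewrite mis_window_mod; have := ltn_pmod i n_gt0.
move: (i %% n) => j lj.
case: (ltngtP j n.-1) => [lj1|lj1|->]; last 2 first.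
- lia.
- by have := H 0; rewrite addn0; apply; lia.
case: (leqP (j + 4) k) => jk.
  have := H j.+1; rewrite (_ : n.-1 + j.+1 = j + n); last by lia.
  by rewrite -!addSn !b_per; apply; lia.
have := H (R - j - 2 - n.-1).
rewrite (_ : n.-1 + (R - j - 2 - n.-1) = R - j.+2); last by lia.
rewrite (_ : (R - j.+2).+1 = R - j.+1); last by lia.
rewrite (_ : (R - j.+1).+1 = R - j); last by lia.
rewrite !b_sym; try lia.
by rewrite mis_windowC; apply; lia.
Qed.

End SymmetricPeriodic.

Lemma cnth_addn_size L p : cnth L (p + size L) = cnth L p.
Proof. by rewrite /cnth modnDr. Qed.

Lemma map_cnth_iota L j : 0 < size L -> j <= size L ->
  map (cnth L) (iota (size L).-1 j.+1) = last false L :: take j L.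
Proof.
move=> L0 jL; rewrite /= /cnth modn_small ?prednK // ?ltn_predL // nth_last; congr cons.
rewrite (_ : iota (size L) j = map (addn (size L)) (iota 0 j)); last by rewrite -iotaDl addn0.
rewrite -map_comp -(map_nth_iota0 false jL).
apply/eq_in_map => i; rewrite mem_iota /= add0n => ij.
by rewrite addnC modnDr modn_small //; apply: leq_trans ij jL.
Qed.

Lemma mis_cycle_segment L R k : 0 < size L ->
  (forall p, p <= R -> cnth L (R - p) = cnth L p) ->
  (size L).*2 <= R.+1 -> R + 5 <= size L + k.*2 -> 3 <= k ->
  mis_cycle L = mis_path (map (cnth L) (iota (size L).-1 k)).
Proof.
move=> L0 Lsym RL Rk k3; apply/allP/idP => [H|H i _].
  apply/mis_path_map_iota => j _.
  rewrite (mis_window_mod (cnth_addn_size L)).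
  by apply: H; rewrite mem_iota ltn_pmod.
exact: (mis_windows_of_segment (cnth_addn_size L) L0 Lsym RL Rk k3 H).
Qed.

Lemma cnth_rev_pal L : 0 < size L -> L = rev L ->
  forall p, p <= (size L).*2.-1 -> cnth L ((size L).*2.-1 - p) = cnth L p.
Proof.
move=> L0 pL p lp; rewrite /cnth.
have ev j : j < size L -> nth false L j = nth false L (size L - j.+1).
  by move=> jn; rewrite {1}pL nth_rev.
case: (ltnP p (size L)) => pn.
  have e : (size L).*2.-1 - p = (size L - p.+1) + size L by lia.
  rewrite (modn_small pn) e modnDr modn_small; last by lia.
  by rewrite [RHS]ev.
have e1 : (size L).*2.-1 - p < size L by lia.
have e2 : p = (p - size L) + size L by lia.
have e3 : p - size L < size L by lia.
rewrite (modn_small e1) {2}e2 modnDr (modn_small e3) ev //.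
by congr nth; lia.
Qed.

Lemma cnth_rev_behead_pal L : 0 < size L -> behead L = rev (behead L) ->
  forall p, p <= (size L).*2 -> cnth L ((size L).*2 - p) = cnth L p.
Proof.
move=> L0 pL.
have ev j : 0 < j < size L -> nth false L j = nth false L (size L - j).
  case: L L0 pL => [//|c t] _ pt /andP[j0 jn]; rewrite /= in pt jn *.
  case: j j0 jn => [//|j] _ jn /=; rewrite subSS {1}pt nth_rev //.
  by rewrite (_ : size t - j = (size t - j.+1).+1) //; lia.
move=> p lp; rewrite /cnth.
case: (ltnP p (size L)) => pn.
  case: p pn lp => [|p] pn lp; first by rewrite subn0 mod0n -addnn modnDr modnn.
  have e : (size L).*2 - p.+1 = (size L - p.+1) + size L by lia.
  rewrite (modn_small pn) e modnDr modn_small; last by lia.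
  by rewrite [RHS]ev //; lia.
case: (ltnP p (size L).*2) => p2; last first.
  have -> : p = (size L).*2 by lia.
  by rewrite subnn mod0n -addnn modnDr modnn.
case: (posnP (p - size L)) => p0.
  have -> : p = size L by lia.
  by rewrite -addnn addnK modnn.
have e1 : (size L).*2 - p < size L by lia.
have e2 : p = (p - size L) + size L by lia.
have e3 : p - size L < size L by lia.
rewrite (modn_small e1) {2}e2 modnDr (modn_small e3) ev; last by lia.
by congr nth; lia.
Qed.

Definition penult (v : bitseq) := head false (behead (rev v)).

Lemma penult_cons x s : 1 < size s -> penult (x :: s) = penult s.
Proof. by rewrite /penult rev_cons -(size_rev s); case: (rev s) => [|a [|b r]]. Qed.

Lemma mis_cycle_cat_rev v : 0 < size v ->
  mis_cycle (v ++ rev v) = mis_path (head false v :: v ++ [:: last false v]).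
Proof.
case/lastP: v => [//|w c] _; set L := rcons w c ++ rev (rcons w c).
have sL : size L = (size w).+1.*2 by rewrite size_cat size_rev size_rcons addnn.
rewrite (mis_cycle_segment (R := (size L).*2.-1) (k := (size w).+3)).
- rewrite map_cnth_iota ?sL; try lia.
  have -> : L = (w ++ [:: c; c]) ++ rev w by rewrite /L rev_rcons cat_rcons -catA.
  rewrite last_cat last_rev (_ : (size w).+2 = size (w ++ [:: c; c])) ?take_size_cat //;
    last by rewrite size_cat addn2.
  by rewrite -cat_rcons last_rcons; case: w {L sL}.
- by rewrite sL.
- by apply: cnth_rev_pal; rewrite ?sL // /L rev_cat revK.
- exact: leqSpred.
- by rewrite sL; lia.
- by [].
Qed.

Lemma mis_cycle_cat_behead_rev v : 1 < size v ->
  mis_cycle (v ++ behead (rev v)) = mis_path (head false v :: v ++ [:: penult v]).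
Proof.
case/lastP: v => [//|w c]; case/lastP: w => [//|u d] _.
rewrite /penult !rev_rcons [behead _]/= [head _ (_ :: _)]/=.
set L := rcons (rcons u d) c ++ d :: rev u.
have sL : size L = (size u).+2.*2.-1 by rewrite size_cat /= size_rev !size_rcons; lia.
rewrite (mis_cycle_segment (R := (size L).*2.-1) (k := (size u).+4)).
- rewrite map_cnth_iota ?sL; try lia.
  have -> : L = (rcons (rcons u d) c ++ [:: d]) ++ rev u by rewrite /L -catA.
  rewrite last_cat last_rev (_ : (size u).+3 = size (rcons (rcons u d) c ++ [:: d]));
    last by rewrite size_cat !size_rcons addn1.
  by rewrite take_size_cat //; case: u {L sL}.
- by rewrite sL; lia.
- apply: cnth_rev_pal; first by rewrite sL; lia.
  by rewrite /L rev_cat rev_cons revK !rev_rcons cat_rcons.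
- exact: leqSpred.
- by rewrite sL; lia.
- by [].
Qed.

Lemma mis_cycle_cons_cat_behead_rev c v : 1 < size v ->
  mis_cycle (c :: v ++ behead (rev v)) = mis_path (head false v :: c :: v ++ [:: penult v]).
Proof.
case/lastP: v => [//|w e]; case/lastP: w => [//|u d] _.
rewrite /penult !rev_rcons [behead _]/= [head _ (_ :: _)]/=.
set L := c :: rcons (rcons u d) e ++ d :: rev u.
have sL : size L = (size u).+2.*2 by rewrite /= size_cat /= size_rev !size_rcons; lia.
rewrite (mis_cycle_segment (R := (size L).*2) (k := (size u).+4.+1)).
- rewrite map_cnth_iota ?sL; try lia.
  have -> : L = (c :: rcons (rcons u d) e ++ [:: d]) ++ rev u by rewrite /L /= -catA.
  rewrite last_cat last_rev (_ : (size u).+4 = size (c :: rcons (rcons u d) e ++ [:: d]));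
    last by rewrite /= size_cat !size_rcons addn1.
  by rewrite take_size_cat //; case: u {L sL}.
- by rewrite sL.
- apply: cnth_rev_behead_pal; first by rewrite sL.
  by rewrite /L /= rev_cat rev_cons revK !rev_rcons cat_rcons.
- by rewrite sL.
- by rewrite sL; lia.
- by [].
Qed.

(** * Counting symmetric cyclic words: the Padovan recurrence *)

Lemma count_andl (c : bool) (P : pred bitseq) s :
  count (fun u => c && P u) s = c * count P s.
Proof. by case: c; rewrite ?mul1n ?mul0n // count_pred0. Qed.

Definition nfold_last m x y :=
  count (fun u => mis_path (x :: y :: u ++ [:: last y u])) (bitseqs m).

Definition nfold_penult m x y :=
  count (fun u => mis_path (x :: y :: u ++ [:: penult (x :: y :: u)])) (bitseqs m).

Lemma nfold_lastS m x y : nfold_last m.+1 x y =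
  mis_window x y true * nfold_last m y true + mis_window x y false * nfold_last m y false.
Proof. by rewrite /nfold_last count_bitseqsS /= !count_andl. Qed.

Lemma nfold_penultS m x y : nfold_penult m.+1 x y =
  mis_window x y true * nfold_penult m y true + mis_window x y false * nfold_penult m y false.
Proof.
rewrite /nfold_penult count_bitseqsS /=.
by congr addn; rewrite -count_andl; apply: eq_count => u /=; rewrite penult_cons.
Qed.

(* The transfer matrix of [mis_window] on pairs of letters has characteristic
   polynomial X^3 - X - 1 (the state [true true] is dead). *)
Lemma transfer_padovan (F : nat -> bool -> bool -> nat) :
  (forall m x y, F m.+1 x y =
     mis_window x y true * F m y true + mis_window x y false * F m y false) ->
  F 0 true true = 0 ->
  forall m x y, F m.+3 x y = F m.+1 x y + F m x y.
Proof.
move=> FS F0 m.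
have F11 k : F k true true = 0 by case: k => // k; rewrite FS.
by case; case; rewrite !FS /= ?F11; lia.
Qed.

Definition npal_odd h :=
  count (fun v => mis_path (head false v :: v ++ [:: penult v])) (bitseqs h.+2).

Definition npal_even h :=
  count (fun v => mis_path (head false v :: v ++ [:: last false v])) (bitseqs h.+1).

Definition npal_cons h :=
  count (fun v => mis_path (head false v :: true :: v ++ [:: penult v])) (bitseqs h.+2) +
  count (fun v => mis_path (head false v :: false :: v ++ [:: penult v])) (bitseqs h.+2).

Lemma npal_oddE h : npal_odd h = nfold_penult h.+1 true true + nfold_penult h.+1 false false.
Proof.
rewrite /npal_odd count_bitseqsS /nfold_penult; congr addn; apply: eq_in_count => u;
  by rewrite mem_bitseqs => /eqP su /=; rewrite (penult_cons _ (s := _ :: u)) //= su.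
Qed.

Lemma npal_evenE h : npal_even h = nfold_last h true true + nfold_last h false false.
Proof. by rewrite /npal_even count_bitseqsS. Qed.

Lemma count_cons_penult h c :
  count (fun v => mis_path (head false v :: c :: v ++ [:: penult v])) (bitseqs h.+2) =
  mis_window true c true * nfold_penult h.+1 c true +
  mis_window false c false * nfold_penult h.+1 c false.
Proof.
rewrite count_bitseqsS /nfold_penult -!count_andl; congr addn; apply: eq_in_count => u;
  by rewrite mem_bitseqs => /eqP su /=; rewrite (penult_cons _ (s := _ :: u)) //= su.
Qed.

Lemma nat_ind3 (P : nat -> Prop) : P 0 -> P 1 -> P 2 ->
  (forall h, P h -> P h.+1 -> P h.+2 -> P h.+3) -> forall h, P h.
Proof.
move=> P0 P1 P2 PS h; suff : [/\ P h, P h.+1 & P h.+2] by case.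
by elim: h => [|h [? ? ?]]; split => //; apply: PS.
Qed.

Lemma npal_odd_padovan h : npal_odd h = padq h.+2.
Proof.
have npal_oddSSS k : npal_odd k.+3 = npal_odd k.+1 + npal_odd k.
  by rewrite !npal_oddE !(transfer_padovan nfold_penultS (erefl 0)); lia.
by elim/nat_ind3: h => [||| h IH0 IH1 IH2]; rewrite ?npal_oddSSS ?IH0 ?IH1 //; vm_compute.
Qed.

Lemma npal_even_cons_padovan h : npal_even h.+1 + npal_cons h = (padq h.+4).*2.
Proof.
have npal_evenSSS k : npal_even k.+3 = npal_even k.+1 + npal_even k.
  by rewrite !npal_evenE !(transfer_padovan nfold_lastS (erefl 0)); lia.
have npal_consSSS k : npal_cons k.+3 = npal_cons k.+1 + npal_cons k.
  by rewrite /npal_cons !count_cons_penult !(transfer_padovan nfold_penultS (erefl 0)); lia.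
elim/nat_ind3: h => [||| h IH0 IH1 IH2]; try by vm_compute.
rewrite npal_evenSSS npal_consSSS (_ : padq h.+3.+4 = padq h.+3.+2 + padq h.+3.+1) //; lia.
Qed.

Lemma count_mis_pal_odd h :
  count (fun L => mis_cycle L && (L == rev L)) (bitseqs h.+1.*2.+1) = padq h.+2.
Proof.
rewrite -npal_odd_padovan (eq_count (a2 := fun L => (L == rev L) && mis_cycle L));
  last by move=> L; rewrite andbC.
rewrite count_palindromes_odd; apply: eq_in_count => v; rewrite mem_bitseqs => /eqP sv.
by rewrite mis_cycle_cat_behead_rev // sv.
Qed.

Lemma count_mis_pal_even h :
  count (fun L => mis_cycle L && (L == rev L)) (bitseqs h.+2.*2) = npal_even h.+1.
Proof.
rewrite (eq_count (a2 := fun L => (L == rev L) && mis_cycle L)); last by move=> L; rewrite andbC.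
rewrite count_palindromes_even; apply: eq_in_count => v; rewrite mem_bitseqs => /eqP sv.
by rewrite mis_cycle_cat_rev // sv.
Qed.

Lemma count_mis_behead_pal_even h :
  count (fun L => mis_cycle L && (behead L == rev (behead L))) (bitseqs h.+2.*2) = npal_cons h.
Proof.
have count_cons c :
    count (fun s => mis_cycle (c :: s) && (s == rev s)) (bitseqs h.+1.*2.+1) =
    count (fun v => mis_path (head false v :: c :: v ++ [:: penult v])) (bitseqs h.+2).
  rewrite (eq_count (a2 := fun s => (s == rev s) && mis_cycle (c :: s)));
    last by move=> s; rewrite andbC.
  rewrite count_palindromes_odd; apply: eq_in_count => v; rewrite mem_bitseqs => /eqP sv.
  by rewrite mis_cycle_cons_cat_behead_rev // sv.
by rewrite doubleS count_bitseqsS /npal_cons -!count_cons.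
Qed.

(** * The dihedral group and its action on subsets of [V_n] *)

Section DihedralGroup.

Variable m : nat.
Local Notation n := m.+1.

Definition dihedral : Type := 'I_n * bool.
HB.instance Definition _ := Finite.on dihedral.

(* [g * h] is the map [g] followed by [h], so that subsets carry a right action. *)
Definition dih_mul (g h : dihedral) : dihedral :=
  ((if h.2 then h.1 - g.1 else h.1 + g.1)%R, g.2 (+) h.2).
Definition dih_one : dihedral := (0%R, false).
Definition dih_inv (g : dihedral) : dihedral := if g.2 then g else ((- g.1)%R, false).

Lemma dih_mulA : associative dih_mul.
Proof.
case=> a [] [] b [] [] c [] /=; rewrite /dih_mul /=; congr pair;
  rewrite ?opprD ?opprK ?addrA //; try (by rewrite addrAC);
  by rewrite -addrA (addrC (-b)%R) addrA.
Qed.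

Lemma dih_mul1 : left_id dih_one dih_mul.
Proof. by case=> a [] /=; rewrite /dih_mul /= ?subr0 ?addr0. Qed.

Lemma dih_mulV : left_inverse dih_one dih_inv dih_mul.
Proof. by case=> a [] /=; rewrite /dih_mul /= ?subrr ?addrN. Qed.

HB.instance Definition _ := Finite_isGroup.Build dihedral dih_mulA dih_mul1 dih_mulV.

End DihedralGroup.

Section DihedralAction.

Variable m : nat.
Local Notation n := m.+1.
Local Notation one := (inZp 1 : 'I_n).
Local Open Scope group_scope.

Definition dih_vertex (g : dihedral m) (i : 'I_n) : 'I_n :=
  if g.2 then (g.1 - i)%R else (g.1 + i)%R.

Lemma dih_vertexM (g h : dihedral m) i : dih_vertex (g * h) i = dih_vertex h (dih_vertex g i).
Proof. by case: g h => a [] [b []]; rewrite /dih_vertex /= ?opprD ?opprK ?addrA. Qed.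

Lemma dih_vertex1 i : dih_vertex 1 i = i.
Proof. by rewrite /dih_vertex /= add0r. Qed.

Lemma dih_vertexK (g : dihedral m) : cancel (dih_vertex g) (dih_vertex g^-1).
Proof. by move=> i; rewrite -dih_vertexM mulgV dih_vertex1. Qed.

Lemma dih_vertexKV (g : dihedral m) : cancel (dih_vertex g^-1) (dih_vertex g).
Proof. by move=> i; rewrite -dih_vertexM mulVg dih_vertex1. Qed.

Definition dih_setact (X : {set 'I_n}) (g : dihedral m) : {set 'I_n} := dih_vertex g @: X.

Lemma dih_setact1 : dih_setact^~ 1 =1 id.
Proof. by move=> X; rewrite /dih_setact (eq_imset _ dih_vertex1) imset_id. Qed.

Lemma dih_setactM X : act_morph dih_setact X.
Proof. by move=> g h; rewrite /dih_setact -imset_comp; apply: eq_imset => i; rewrite dih_vertexM. Qed.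

Canonical dih_action := TotalAction dih_setact1 dih_setactM.

Lemma act_setE (g : dihedral m) X : act_set (g : dih n) X = dih_setact X g.
Proof.
have val_vertex i : nat_of_ord (dih_vertex g i) = act_idx (g : dih n) i.
  by rewrite /dih_vertex /act_idx; case: g.2; rewrite //= modnDmr.
apply/setP => j; rewrite inE; apply/existsP/imsetP.
  by case=> v /andP[vX /eqP e]; exists v => //; apply: val_inj; rewrite /= val_vertex.
by case=> v vX ->; exists v; rewrite vX val_vertex eqxx.
Qed.

Lemma mem_dih_setact X g j : (j \in dih_setact X g) = (dih_vertex g^-1 j \in X).
Proof.
apply/imsetP/idP => [[i iX ->]|jX]; first by rewrite dih_vertexK.
by exists (dih_vertex g^-1 j); rewrite ?dih_vertexKV.
Qed.

Lemma inXE (X : {set 'I_n}) j : inX X j = (inZp j \in X).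
Proof.
apply/existsP/idP => [[x /andP[xX /eqP e]]|jX].
  by rewrite (_ : inZp j = x) //; apply: val_inj; rewrite /= e.
by exists (inZp j); rewrite jX eqxx.
Qed.

Lemma XfamE (X : {set 'I_n}) :
  (X \in Xfam n) = [forall i : 'I_n, mis_window (i \in X) (i + one \in X)%R (i + one + one \in X)%R].
Proof.
have inZpS (i : 'I_n) : inZp i.+1 = (i + one)%R by apply: val_inj; rewrite /= modnDmr addn1.
have inZpSS (i : 'I_n) : inZp i.+2 = (i + one + one)%R.
  by apply: val_inj; rewrite /= !modnDmr modnDml addn1 addn1.
have inZp_ord (i : 'I_n) : inZp i = i by apply: val_inj; rewrite /= modn_small.
rewrite inE; apply/andP/forallP => [[/forallP H1 /forallP H2] i|H].
  move: (H1 i) (H1 (i + one)%R) (H2 i); rewrite !inXE !inZpS inZpSS !inZp_ord.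
  by move=> h1 h2 h3; rewrite /mis_window h1 h2 h3.
split; apply/forallP=> i; move: (H i) (H (i + one)%R);
  rewrite !inXE ?inZpSS ?inZpS inZp_ord; by case/and3P.
Qed.

Lemma Xfam_act X g : X \in Xfam n -> dih_setact X g \in Xfam n.
Proof.
rewrite !XfamE => /forallP H; apply/forallP => i; rewrite !mem_dih_setact /dih_vertex.
case: (g^-1).2; last by rewrite !addrA; apply: H.
set a := (g^-1).1.
have e1 : (a - (i + one))%R = (a - i - one)%R by rewrite opprD addrA.
have e2 : (a - (i + one + one))%R = (a - i - one - one)%R by rewrite !opprD !addrA.
have e3 : (a - i)%R = (a - i - one - one + one + one)%R by rewrite !subrK.
rewrite e1 e2 {1}e3 mis_windowC.
by have := H (a - i - one - one)%R; rewrite !subrK.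
Qed.

End DihedralAction.

(** * Counting the orbits by Burnside's lemma *)

Section ReflectionOrbits.

Variable m : nat.
Local Notation n := m.+1.
Local Open Scope group_scope.

Definition refl_sym : {set {set 'I_n}} :=
  [set X in Xfam n | [exists g : dihedral m, g.2 && (dih_setact X g == X)]].

Lemma refl_symE X : (X \in refl_sym) =
  (X \in Xfam n) && [exists g : dihedral m, g.2 && (dih_setact X g == X)].
Proof. by rewrite /refl_sym in_set. Qed.

Lemma refl_sym_act X g : X \in refl_sym -> dih_setact X g \in refl_sym.
Proof.
rewrite !refl_symE => /andP[XF /existsP[r /andP[r2 /eqP rX]]].
rewrite Xfam_act //; apply/existsP; exists (g^-1 * r * g).
have mul2 (a b : dihedral m) : (a * b).2 = a.2 (+) b.2 by [].
have inv2 (a : dihedral m) : (a^-1).2 = a.2 by case: a => a [].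
rewrite !mul2 inv2 r2.
by case: g.2; rewrite /= -!dih_setactM !mulgA mulgV mul1g dih_setactM rX.
Qed.

Lemma acts_refl_sym : [acts setT, on refl_sym | dih_action m].
Proof.
apply/actsP => g _ X; apply/idP/idP => [H|]; last exact: refl_sym_act.
by have := refl_sym_act g^-1 H; rewrite /= -dih_setactM mulgV dih_setact1.
Qed.

Lemma refl_orbitsE : refl_orbits n = orbit (dih_action m) setT @: refl_sym.
Proof.
rewrite /refl_orbits.
have -> : [set X in Xfam n | ~~ (Stab X \subset rotations n)] = refl_sym.
  apply/setP => X; rewrite refl_symE in_set; congr andb.
  apply/subsetPn/existsP => [[g] gS gR|[g /andP[g2 /eqP gX]]].
    by exists g; move: gS gR; rewrite !inE negbK act_setE => -> ->.
  by exists g; rewrite !inE ?g2 // act_setE; apply/eqP.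
have orbitE X : orbit_of X = orbit (dih_action m) setT X.
  apply/setP => Y; apply/imsetP/imsetP => [[g _ ->]|[g _ ->]];
    by exists g; rewrite ?inE ?act_setE.
by apply/setP => O; apply/imsetP/imsetP => [[X XR ->]|[X XR ->]]; exists X; rewrite ?orbitE.
Qed.

Lemma afix_refl_sym (g : dihedral m) :
  'Fix_(refl_sym | dih_action m)[g] = [set X in refl_sym | dih_setact X g == X].
Proof. by apply/setP => X; rewrite in_setI [RHS]inE; congr andb; apply/afix1P/eqP. Qed.

(* On a set with a reflection symmetry [r], [g |-> r * g] exchanges the rotations
   fixing it with the reflections fixing it. *)
Lemma sum_afix_refl_rot :
  \sum_(g : dihedral m | g.2) #|'Fix_(refl_sym | dih_action m)[g]| =
  \sum_(g : dihedral m | ~~ g.2) #|'Fix_(refl_sym | dih_action m)[g]|.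
Proof.
have card_sum (A : {set {set 'I_n}}) : #|A| = \sum_X (X \in A).
  by rewrite -sum1_card big_mkcond /=; apply: eq_bigr => X _; case: (X \in A).
under eq_bigr do rewrite afix_refl_sym card_sum.
under [RHS]eq_bigr do rewrite afix_refl_sym card_sum.
rewrite exchange_big [RHS]exchange_big; apply: eq_bigr => X _.
case XR: (X \in refl_sym); last by rewrite !big1 // => g _; rewrite inE XR.
move: (XR); rewrite inE => /andP[_ /existsP[r /andP[r2 /eqP rX]]].
rewrite (reindex_inj (mulgI r)) /=; apply: eq_big => g; first by rewrite r2.
by move=> _; rewrite !inE dih_setactM rX.
Qed.

Definition nfix_refl (k : 'I_n) := #|[set X in Xfam n | dih_setact X (k, true) == X]|.

Lemma sum_nfix_refl : \sum_(k < n) nfix_refl k = (#|refl_orbits n| * n)%N.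
Proof.
have FC := Frobenius_Cauchy acts_refl_sym.
rewrite cardsT card_prod card_ord card_bool (bigID (fun g : dihedral m => g.2)) /= in FC.
have sumT (P : pred (dihedral m)) (F : dihedral m -> nat) :
    \sum_(g in [set: dihedral m] | P g) F g = \sum_(g | P g) F g.
  by apply: eq_bigl => g; rewrite in_setT.
rewrite !sumT -sum_afix_refl_rot addnn mulnA -!muln2 in FC.
move/eqP: FC; rewrite eqn_pmul2r // refl_orbitsE => /eqP <-.
rewrite (eq_bigl (fun g : dihedral m => g \in [set (k, true) | k : 'I_n])); last first.
  by move=> [a b] /=; apply/idP/imsetP => [-> |[k _ [_ ->]]] //; exists a.
rewrite big_imset /=; last by move=> x y _ _ [].
apply: eq_bigr => k _; rewrite afix_refl_sym; apply: eq_card => X.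
rewrite [in RHS]in_set refl_symE [in LHS]in_set.
case fX: (dih_setact X (k, true) == X); rewrite ?andbF ?andbT //.
by rewrite andb_idr // => _; apply/existsP; exists (k, true); rewrite fX.
Qed.

End ReflectionOrbits.

Section ConjugateReflections.

Variable m : nat.
Local Notation n := m.+1.
Local Open Scope group_scope.

(* Conjugating [sigma^k tau] by [sigma^j] gives [sigma^(k + 2j) tau]. *)
Lemma nfix_reflDD (k j : 'I_n) : nfix_refl k = nfix_refl (k + j + j)%R.
Proof.
pose s : dihedral m := (j, false).
have conj_s : ((k + j + j)%R, true) = s^-1 * (k, true) * s.
  change (((k + j + j)%R, true) = dih_mul (dih_mul (dih_inv (j, false)) (k, true)) (j, false)).
  by rewrite /dih_mul /dih_inv /= opprK addrC addrA.
rewrite /nfix_refl conj_s -(card_imset _ (act_inj (dih_action m) s)); apply: eq_card => Y.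
rewrite inE; apply/imsetP/andP => [[X] |[YF /eqP YE]].
  rewrite inE => /andP[XF /eqP XE] ->; split; first exact: Xfam_act.
  by rewrite /= -!dih_setactM !mulgA mulgV mul1g dih_setactM XE.
exists (dih_setact Y s^-1); last by rewrite /= -dih_setactM mulVg dih_setact1.
rewrite inE Xfam_act //=; apply/eqP.
by rewrite -dih_setactM -{2}YE -dih_setactM mulgK.
Qed.

Lemma nfix_refl_eq (k t : 'I_n) x : (k + x + x) %% n = t -> nfix_refl k = nfix_refl t.
Proof.
move=> e; rewrite (nfix_reflDD k (inZp x)); congr nfix_refl; apply: val_inj.
by rewrite /= !modnDmr modnDml.
Qed.

Lemma nfix_refl_odd (k : 'I_n) : odd n -> nfix_refl k = nfix_refl (ord_max : 'I_n).
Proof.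
move=> on; apply: (nfix_refl_eq (x := (m - k) * (n./2 + 1))) => /=.
have e : k + (m - k) * (n./2 + 1) + (m - k) * (n./2 + 1) = (m - k) * n + m.
  have := ltn_ord k; have := odd_double_half n; rewrite on /=.
  by move: (n./2) => h; nia.
by rewrite e modnMDl modn_small.
Qed.

Lemma nfix_refl_even (k : 'I_n) : ~~ odd n ->
  nfix_refl k = if odd k then nfix_refl (ord_max : 'I_n) else nfix_refl (ord0 : 'I_n).
Proof.
move=> en; case ok: (odd k).
  apply: (nfix_refl_eq (x := (m - k)./2)) => /=.
  have e : k + (m - k)./2 + (m - k)./2 = m.
    have := ltn_ord k; have := odd_double_half (m - k).
    rewrite oddB; last by rewrite -ltnS.
    by move: en; rewrite /= ok => /negbNE -> /=; move: ((m - k)./2) => h; lia.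
  by rewrite e modn_small.
apply: (nfix_refl_eq (x := (n - k)./2)) => /=.
have e : k + (n - k)./2 + (n - k)./2 = n.
  have := ltn_ord k; have := odd_double_half (n - k).
  rewrite oddB; last exact: ltnW.
  by move: en; rewrite ok => /negbTE -> /=; move: ((n - k)./2) => h; lia.
by rewrite e modnn.
Qed.

Lemma card_refl_orbits_odd : odd n -> #|refl_orbits n| = nfix_refl (ord_max : 'I_n).
Proof.
move=> on; apply/eqP; rewrite -(eqn_pmul2r (ltn0Sn m)) -sum_nfix_refl.
under eq_bigr do rewrite (nfix_refl_odd _ on).
by rewrite sum_nat_const card_ord mulnC.
Qed.

Lemma card_refl_orbits_even :
  ~~ odd n -> (#|refl_orbits n|).*2 = (nfix_refl (ord_max : 'I_n) + nfix_refl (ord0 : 'I_n))%N.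
Proof.
move=> en; have := odd_double_half n; rewrite (negbTE en) add0n => e.
set A := nfix_refl _; set B := nfix_refl _.
have sum_parity : \sum_(k < n) nfix_refl k = (n./2 * (A + B))%N.
  under eq_bigr do rewrite (nfix_refl_even _ en).
  rewrite -(big_mkord xpredT (fun k => if odd k then A else B)) -{1}e.
  elim: (n./2) => [|h IH]; first by rewrite big_geq.
  by rewrite doubleS !big_nat_recr //= IH odd_double /=; lia.
have h_gt0 : 0 < n./2 by rewrite -double_gt0 e.
apply/eqP; rewrite -(eqn_pmul2l h_gt0) -sum_parity sum_nfix_refl.
by rewrite -[X in _ == (_ * X)%N]e -!muln2 mulnCA mulnA.
Qed.

End ConjugateReflections.

(** * Fixed points of reflections as symmetric cyclic words *)

Section SetsAsWords.

Variable n : nat.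

Definition set_of_bits (L : bitseq) : {set 'I_n} := [set i : 'I_n | nth false L i].

Lemma set_of_bits_inj L1 L2 : size L1 = n -> size L2 = n ->
  set_of_bits L1 = set_of_bits L2 -> L1 = L2.
Proof.
move=> s1 s2 e; apply: (@eq_from_nth _ false); first by rewrite s1 s2.
by move=> i; rewrite s1 => lin; move/setP: e => /(_ (Ordinal lin)); rewrite !inE.
Qed.

Lemma card_set_bitseqs (P : pred {set 'I_n}) :
  #|[set X | P X]| = count (fun L => P (set_of_bits L)) (bitseqs n).
Proof.
set s := filter P (map set_of_bits (bitseqs n)).
have us : uniq s.
  apply: filter_uniq; rewrite map_inj_in_uniq ?uniq_bitseqs // => L1 L2.
  by rewrite !mem_bitseqs => /eqP ? /eqP ?; apply: set_of_bits_inj.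
have -> : #|[set X | P X]| = #|s|.
  apply: eq_card => X; rewrite inE mem_filter; case: (P X) => //=.
  apply/esym/mapP; exists [seq i \in X | i <- enum 'I_n].
    by rewrite mem_bitseqs size_map size_enum_ord.
  by apply/setP => i; rewrite inE (nth_map i) ?size_enum_ord // nth_ord_enum.
by move/card_uniqP: us => ->; rewrite size_filter count_map.
Qed.

End SetsAsWords.

Section ReflectionFixedWords.

Variable m : nat.
Local Notation n := m.+1.
Local Open Scope group_scope.

Lemma Xfam_set_of_bits L : size L = n -> (set_of_bits n L \in Xfam n) = mis_cycle L.
Proof.
move=> sL.
have inX_bits j : inX (set_of_bits n L) j = cnth L j by rewrite inXE inE /cnth sL.
have cnth_mod j : cnth L (j %% n) = cnth L j by rewrite /cnth sL modn_mod.
have cnth_modS j : cnth L (j %% n).+1 = cnth L j.+1.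
  by rewrite /cnth sL -addn1 modnDml addn1.
rewrite inE /mis_cycle sL; apply/andP/allP => [[/forallP H1 /forallP H2] i|H].
  rewrite mem_iota /= => lin; have := H1 (Ordinal lin); have := H2 (Ordinal lin).
  have lin' : i.+1 %% n < n by apply: ltn_pmod.
  have := H1 (Ordinal lin'); rewrite /= !inX_bits cnth_mod cnth_modS.
  by rewrite /mis_window => -> -> ->.
split; apply/forallP => i; have := H i; rewrite mem_iota /= ltn_ord !inX_bits;
  by case/(_ isT)/and3P.
Qed.

Lemma refl_fixedE (k : 'I_n) X :
  (dih_setact X (k, true) == X) = [forall i : 'I_n, ((k - i)%R \in X) == (i \in X)].
Proof.
have inv_refl : ((k, true) : dihedral m)^-1 = (k, true) by [].
apply/eqP/forallP => [H i|H]; first by rewrite -{2}H mem_dih_setact inv_refl.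
by apply/setP => i; rewrite mem_dih_setact inv_refl; apply/eqP/H.
Qed.

Lemma val_subr (k i : 'I_n) : nat_of_ord (k - i)%R = (k + (n - i)) %% n.
Proof. by rewrite /= modnDmr. Qed.

Lemma refl_last_fixed_bits L : size L = n ->
  (dih_setact (set_of_bits n L) (ord_max, true) == set_of_bits n L) = (L == rev L).
Proof.
move=> sL; rewrite refl_fixedE; apply/forallP/eqP => [H|pL i].
  apply: (@eq_from_nth _ false); first by rewrite size_rev.
  move=> i; rewrite sL => lin; rewrite nth_rev sL //.
  move/eqP: (H (Ordinal lin)); rewrite !inE val_subr /=.
  by rewrite (_ : m + (n - i) = (m - i) + n) ?modnDr ?modn_small; try lia; move=> ->.
have lin := ltn_ord i.
rewrite !inE val_subr /= (_ : m + (n - i) = (m - i) + n) ?modnDr ?modn_small; try lia.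
by rewrite {2}pL nth_rev sL // subSS.
Qed.

Lemma refl0_fixed_bits L : size L = n ->
  (dih_setact (set_of_bits n L) (ord0, true) == set_of_bits n L) =
  (behead L == rev (behead L)).
Proof.
move=> sL; rewrite refl_fixedE; apply/forallP/eqP => [H|pL i].
  apply: (@eq_from_nth _ false); first by rewrite size_rev.
  move=> i; rewrite size_behead sL /= => lin; rewrite nth_rev size_behead sL //=.
  have li1 : i.+1 < n by lia.
  move/eqP: (H (Ordinal li1)); rewrite !inE val_subr /= add0n.
  rewrite !nth_behead modn_small; last by lia.
  by rewrite (_ : n - i.+1 = (m - i.+1).+1) //; lia.
rewrite !inE val_subr /= add0n.
move: (ltn_ord i); case: i => [[|i] li] /= _; first by rewrite subn0 modnn.
rewrite modn_small; last by lia.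
case: L sL pL => // c t [st] pt.
rewrite /= in pt; rewrite (_ : n - i.+1 = (m - i.+1).+1) /=; last by lia.
by rewrite {2}pt nth_rev ?st //; lia.
Qed.

Lemma nfix_refl_last_count :
  nfix_refl (ord_max : 'I_n) = count (fun L => mis_cycle L && (L == rev L)) (bitseqs n).
Proof.
rewrite /nfix_refl card_set_bitseqs; apply: eq_in_count => L; rewrite mem_bitseqs => /eqP sL.
by rewrite Xfam_set_of_bits // refl_last_fixed_bits.
Qed.

Lemma nfix_refl0_count : nfix_refl (ord0 : 'I_n) =
  count (fun L => mis_cycle L && (behead L == rev (behead L))) (bitseqs n).
Proof.
rewrite /nfix_refl card_set_bitseqs; apply: eq_in_count => L; rewrite mem_bitseqs => /eqP sL.
by rewrite Xfam_set_of_bits // refl0_fixed_bits.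
Qed.

End ReflectionFixedWords.

Lemma card_refl_orbits_odd_padovan h : #|refl_orbits h.*2.+1| = padq h.+1.
Proof.
rewrite card_refl_orbits_odd; last by rewrite /= odd_double.
rewrite (nfix_refl_last_count h.*2).
by case: h => [|h]; [vm_compute | exact: count_mis_pal_odd].
Qed.

Lemma card_refl_orbits_even_padovan h : #|refl_orbits h.+1.*2| = padq h.+3.
Proof.
apply: double_inj; rewrite card_refl_orbits_even; last by rewrite /= odd_double.
rewrite (nfix_refl_last_count h.*2.+1) (nfix_refl0_count h.*2.+1).
case: h => [|h]; first by vm_compute.
by rewrite count_mis_pal_even count_mis_behead_pal_even npal_even_cons_padovan.
Qed.

Theorem proposition3p4 (n : nat) (hn : 1 <= n) : #|refl_orbits n| = padr n.
Proof.
rewrite /padr -[n in LHS]odd_double_half; case: ifP => on.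
  by rewrite add1n card_refl_orbits_odd_padovan -uphalfE uphalf_half on.
have [h ->] : exists h, n./2 = h.+1.
  case: n./2 (odd_double_half n) => [|h]; last by exists h.
  by rewrite on => n0; rewrite -n0 in hn.
by rewrite add0n card_refl_orbits_even_padovan addn2.
Qed.
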